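(* Let $n\ge 3$. Each of the following representations $\zeta'_i:\mathrm{TVB}_n\to\mathrm{GL}_{n+1}(\mathbb{C})$, $1\le i\le 7$, given by $\zeta'_i(\sigma_k)=L_k(S)$, $\zeta'_i(\rho_k)=L_k(R)$ ($1\le k\le n-1$), $\zeta'_i(\gamma_j)=L_j(G)$ ($1\le j\le n$), is unfaithful (not injective): \begin{itemize} \item[(1)] $\zeta'_1$: $S=\begin{pmatrix}0&b\\ c&0\end{pmatrix}$, $R=\begin{pmatrix}0&-\frac{\sqrt b}{\sqrt c}\\ -\frac{\sqrt c}{\sqrt b}&0\end{pmatrix}$, $G=\mathrm{diag}(-1,1)$, $b,c\in\mathbb{C}^*$. \item[(2)] $\zeta'_2$: $S=\begin{pmatrix}0&b\\ c&0\end{pmatrix}$, $R=\begin{pmatrix}0&\frac{\sqrt b}{\sqrt c}\\ \frac{\sqrt c}{\sqrt b}&0\end{pmatrix}$, $G=\mathrm{diag}(-1,1)$, $b,c\in\mathbb{C}^*$. \item[(3)] $\zeta'_3$: $S$ and $R$ as in (1), $G=I_2$. \item[(4)] $\zeta'_4$: $S$ and $R$ as in (2), $G=I_2$. \item[(5)] $\zeta'_5$: $S=I_2$, $R=\begin{pmatrix}0&x\\ \frac1x&0\end{pmatrix}$, $G=\mathrm{diag}(-1,1)$, $x\in\mathbb{C}^*$. \item[(6)] $\zeta'_6$: $S=I_2$, $R=\begin{pmatrix}0&x\\ \frac1x&0\end{pmatrix}$, $G=I_2$, $x\in\mathbb{C}^*$. \item[(7)] $\zeta'_7$: $S=R=G=I_2$.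 \end{itemize} Here $\mathbb{C}^*=\mathbb{C}\setminus\{0\}$ and $\sqrt b,\sqrt c$ denote square roots of $b,c$.
   Context: For $n\ge 2$, the twisted virtual braid group $\mathrm{TVB}_n$ is the group with generators $\sigma_1,\dots,\sigma_{n-1}$, $\rho_1,\dots,\rho_{n-1}$, $\gamma_1,\dots,\gamma_n$ and defining relations: $\sigma_i\sigma_{i+1}\sigma_i=\sigma_{i+1}\sigma_i\sigma_{i+1}$ ($1\le i\le n-2$); $\sigma_i\sigma_j=\sigma_j\sigma_i$ ($|i-j|\ge2$); $\rho_i^2=1$; $\rho_i\rho_j=\rho_j\rho_i$ ($|i-j|\ge 2$); $\rho_i\rho_{i+1}\rho_i=\rho_{i+1}\rho_i\rho_{i+1}$; $\sigma_i\rho_j=\rho_j\sigma_i$ ($|i-j|\ge 2$); $\rho_i\rho_{i+1}\sigma_i=\sigma_{i+1}\rho_i\rho_{i+1}$; $\gamma_i^2=1$; $\gamma_i\gamma_j=\gamma_j\gamma_i$ (all $i,j$); $\gamma_j\rho_i=\rho_i\gamma_j$ and $\gamma_j\sigma_i=\sigma_i\gamma_j$ ($|i-j|\ge 2$); $\rho_i\gamma_i=\gamma_{i+1}\rho_i$; $\rho_i\sigma_i\rho_i=\gamma_{i+1}\gamma_i\sigma_i\gamma_i\gamma_{i+1}$ ($1\le i\le n-1$). For a $2\times2$ matrix $M$ and $1\le i\le n$, $L_i(M)$ denotes the $(n+1)\times(n+1)$ block-diagonal matrix $\mathrm{diag}(I_{i-1},M,I_{n-i})$. A representation is faithful if it is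 injective. *)

From HB Require Import structures.
From mathcomp Require Import all_boot all_order all_algebra.
From mathcomp Require Import complex.
From mathcomp Require Import Rstruct.
Set Implicit Arguments. Unset Strict Implicit. Unset Printing Implicit Defensive.
Import Order.TTheory GRing.Theory Num.Theory.
Local Open Scope ring_scope.

Definition C : Type := complex Rdefinitions.R.
HB.instance Definition _ := GRing.Field.on C.

(** Generators: [Sig k] = sigma_k, [Rho k] = rho_k, [Gam k] = gamma_k (1-based). *)
Inductive gen : Type := Sig of nat | Rho of nat | Gam of nat.

Definition gen_valid (n : nat) (g : gen) : bool :=
  match g with
  | Sig k => (1 <= k <= n.-1)%N
  | Rho k => (1 <= k <= n.-1)%N
  | Gam k => (1 <= k <= n)%N
  end.

(** A letter is a generator together with an exponent sign:
    [(g, false)] is g, [(g, true)] is g^{-1}.  Words in the free group. *)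
Definition letter := (gen * bool)%type.
Definition word := seq letter.

Definition word_valid (n : nat) (w : word) : Prop :=
  forall x, List.In x w -> gen_valid n x.1.

Definition pos (g : gen) : letter := (g, false).

Inductive tvb_relator (n : nat) : word -> word -> Prop :=
| rel_free g b : gen_valid n g -> tvb_relator n [:: (g, b); (g, ~~ b)] [::]
| rel_sss i : (1 <= i <= n - 2)%N ->
    tvb_relator n [:: pos (Sig i); pos (Sig i.+1); pos (Sig i)]
                  [:: pos (Sig i.+1); pos (Sig i); pos (Sig i.+1)]
| rel_ss i j : (1 <= i <= n.-1)%N -> (1 <= j <= n.-1)%N -> (2 <= `|i - j|)%N ->
    tvb_relator n [:: pos (Sig i); pos (Sig j)] [:: pos (Sig j); pos (Sig i)]
| rel_rr2 i : (1 <= i <= n.-1)%N ->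
    tvb_relator n [:: pos (Rho i); pos (Rho i)] [::]
| rel_rr i j : (1 <= i <= n.-1)%N -> (1 <= j <= n.-1)%N -> (2 <= `|i - j|)%N ->
    tvb_relator n [:: pos (Rho i); pos (Rho j)] [:: pos (Rho j); pos (Rho i)]
| rel_rrr i : (1 <= i <= n - 2)%N ->
    tvb_relator n [:: pos (Rho i); pos (Rho i.+1); pos (Rho i)]
                  [:: pos (Rho i.+1); pos (Rho i); pos (Rho i.+1)]
| rel_sr i j : (1 <= i <= n.-1)%N -> (1 <= j <= n.-1)%N -> (2 <= `|i - j|)%N ->
    tvb_relator n [:: pos (Sig i); pos (Rho j)] [:: pos (Rho j); pos (Sig i)]
| rel_rrs i : (1 <= i <= n - 2)%N ->
    tvb_relator n [:: pos (Rho i); pos (Rho i.+1); pos (Sig i)]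
                  [:: pos (Sig i.+1); pos (Rho i); pos (Rho i.+1)]
| rel_gg2 i : (1 <= i <= n)%N ->
    tvb_relator n [:: pos (Gam i); pos (Gam i)] [::]
| rel_gg i j : (1 <= i <= n)%N -> (1 <= j <= n)%N ->
    tvb_relator n [:: pos (Gam i); pos (Gam j)] [:: pos (Gam j); pos (Gam i)]
| rel_gr i j : (1 <= i <= n.-1)%N -> (1 <= j <= n)%N -> (2 <= `|i - j|)%N ->
    tvb_relator n [:: pos (Gam j); pos (Rho i)] [:: pos (Rho i); pos (Gam j)]
| rel_gs i j : (1 <= i <= n.-1)%N -> (1 <= j <= n)%N -> (2 <= `|i - j|)%N ->
    tvb_relator n [:: pos (Gam j); pos (Sig i)] [:: pos (Sig i); pos (Gam j)]
| rel_rg i : (1 <= i <= n.-1)%N ->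
    tvb_relator n [:: pos (Rho i); pos (Gam i)] [:: pos (Gam i.+1); pos (Rho i)]
| rel_rsr i : (1 <= i <= n.-1)%N ->
    tvb_relator n [:: pos (Rho i); pos (Sig i); pos (Rho i)]
      [:: pos (Gam i.+1); pos (Gam i); pos (Sig i); pos (Gam i); pos (Gam i.+1)].

Inductive tvb_eq (n : nat) : word -> word -> Prop :=
| tvb_step u v l r : word_valid n u -> word_valid n v -> tvb_relator n l r ->
    tvb_eq n (u ++ l ++ v) (u ++ r ++ v)
| tvb_refl w : tvb_eq n w w
| tvb_sym w1 w2 : tvb_eq n w1 w2 -> tvb_eq n w2 w1
| tvb_trans w1 w2 w3 : tvb_eq n w1 w2 -> tvb_eq n w2 w3 -> tvb_eq n w1 w3.

Definition mx2 (a b c d : C) : 'M[C]_2 :=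
  \matrix_(i < 2, j < 2)
    if val i == 0%N then (if val j == 0%N then a else b)
    else (if val j == 0%N then c else d).

(** L_k(M) = diag(I_{k-1}, M, I_{n-k}) in GL_{n+1}, for 1 <= k <= n. *)
Definition Lmx (n k : nat) (M : 'M[C]_2) : 'M[C]_(n.+1) :=
  \matrix_(i < n.+1, j < n.+1)
    if (k.-1 <= i <= k)%N && (k.-1 <= j <= k)%N
    then M (inord (i - k.-1)) (inord (j - k.-1))
    else (i == j)%:R.

Definition zeta_gen (n : nat) (S R G : 'M[C]_2) (g : gen) : 'M[C]_(n.+1) :=
  match g with
  | Sig k => Lmx n k S
  | Rho k => Lmx n k R
  | Gam k => Lmx n k G
  end.

Definition zeta_letter (n : nat) (S R G : 'M[C]_2) (x : letter) : 'M[C]_(n.+1) :=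
  if x.2 then invmx (zeta_gen n S R G x.1) else zeta_gen n S R G x.1.

Definition zeta_word (n : nat) (S R G : 'M[C]_2) (w : word) : 'M[C]_(n.+1) :=
  foldr (fun x M => zeta_letter n S R G x *m M) 1%:M w.

Definition unfaithful (n : nat) (S R G : 'M[C]_2) : Prop :=
  exists w1 w2 : word, word_valid n w1 /\ word_valid n w2 /\
    ~ tvb_eq n w1 w2 /\ zeta_word n S R G w1 = zeta_word n S R G w2.

(** In TVB_n the generator σ_1 does not commute with γ_1 γ_2. To see this,
    let TVB_n act on a token carrying a position m and two bits (x, y):
    γ_j flips x when the token sits at j, ρ_i swaps the positions i and i+1,
    and σ_i swaps them while flipping y when x has a prescribed value; all
    defining relations hold for this action, and the two products move the
    token from 1 to 2 with different values of y.  On the other hand, every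
    ζ'_i has G = diag(g, 1), so γ_1 γ_2 ↦ L_1(G) L_2(G) = diag(g, g, 1, ..., 1),
    which commutes with every L_1(S). *)
From HB Require Import structures.
From mathcomp Require Import all_boot all_order all_algebra.
From mathcomp Require Import complex.
From mathcomp Require Import zify.
Import GRing.Theory Num.Theory.

Definition token := (nat * (bool * bool))%type.

Definition flip_if (x : bool) (t : bool * bool) : bool * bool :=
  if t.1 == x then (t.1, ~~ t.2) else t.

Definition gen_act (g : gen) (inv : bool) (p : token) : token :=
  let: (m, t) := p in
  match g with
  | Sig i => if m == i then (i.+1, flip_if inv t)
             else if m == i.+1 then (i, flip_if (~~ inv) t) else p
  | Rho i => if m == i then (i.+1, t) else if m == i.+1 then (i, t) else p
  | Gam i => if m == i then (i, (~~ t.1, t.2)) else p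
  end.

Definition word_act (w : word) (p : token) : token :=
  foldr (fun x q => gen_act x.1 x.2 q) p w.

Lemma word_act_cat u v p : word_act (u ++ v) p = word_act u (word_act v p).
Proof. by rewrite /word_act foldr_cat. Qed.

Lemma tvb_relator_act n l r : tvb_relator n l r -> word_act l =1 word_act r.
Proof.
case=> [g b _|||||||||||||] *;
  case=> m [x y]; rewrite /word_act /=; [case: g => i; case: b | ..];
  repeat match goal with
  | |- context [?a == ?b] => case: (@eqP _ a b) => ? /=; try subst
  end; try lia;
  by case: x; case: y.
Qed.

Lemma tvb_eq_act n w1 w2 : tvb_eq n w1 w2 -> word_act w1 =1 word_act w2.
Proof.
elim=> [u v l r _ _ /tvb_relator_act hlr|//|? ? _ IH|? ? ? _ IH1 _ IH2] p.
- by rewrite !word_act_cat hlr.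
- by rewrite IH.
- by rewrite IH1 IH2.
Qed.

Definition sigma1_gamma12 : word := [:: pos (Sig 1); pos (Gam 1); pos (Gam 2)].
Definition gamma12_sigma1 : word := [:: pos (Gam 1); pos (Gam 2); pos (Sig 1)].

Lemma sigma1_gamma12_neq n : ~ tvb_eq n sigma1_gamma12 gamma12_sigma1.
Proof. by move=> /tvb_eq_act /(_ (1%N, (false, false))). Qed.

Local Open Scope ring_scope.

Lemma mx2_1 : mx2 1 0 0 1 = 1%:M.
Proof. by apply/matrixP=> -[[|[|//]] ?] [[|[|//]] ?]; rewrite !mxE. Qed.

Lemma Lmx_mx2_diag n k (a d : C) :
  Lmx n k (mx2 a 0 0 d) =
  diag_mx (\row_(j < n.+1) if j == k.-1 :> nat then a
                           else if j == k :> nat then d else 1).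
Proof.
apply/matrixP=> i j; rewrite /mx2 !mxE.
case: ifP => [/andP[/andP[hi1 hi2] /andP[hj1 hj2]]|hij].
  rewrite /= !inordK; try lia.
  have [<-|nij] := eqVneq i j.
    by rewrite mulr1n; repeat case: ifP => ? //; exfalso; lia.
  rewrite mulr0n; move: nij; rewrite -val_eqE => /eqP /= nij.
  by repeat case: ifP => ? //; exfalso; lia.
have [eij|//] := eqVneq i j; subst j; rewrite mulr1n.
by repeat case: ifP => ? //; exfalso; lia.
Qed.

Lemma Lmx_diag_comm n k (M : 'M[C]_2) (d : 'rV[C]_n.+1) :
  (forall i j : 'I_n.+1, (k.-1 <= i <= k)%N -> (k.-1 <= j <= k)%N -> d 0 i = d 0 j) ->
  Lmx n k M *m diag_mx d = diag_mx d *m Lmx n k M.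
Proof.
move=> dE; rewrite mul_mx_diag mul_diag_mx; apply/matrixP=> i j; rewrite !mxE.
case: ifP => [/andP[hi hj]|_]; first by rewrite (dE i j hi hj) mulrC.
by have [->|_] := eqVneq i j; rewrite ?mulr1n ?mulr0n ?mulr1 ?mul1r ?mulr0 ?mul0r.
Qed.

Lemma Lmx_gamma12 n (g : C) :
  Lmx n 1 (mx2 g 0 0 1) *m Lmx n 2 (mx2 g 0 0 1) =
  diag_mx (\row_(j < n.+1) if (j <= 1)%N then g else 1).
Proof.
rewrite !Lmx_mx2_diag mulmx_diag; congr diag_mx; apply/matrixP=> i j; rewrite !mxE.
by case: j => [[|[|[|j]]] ?] /=; rewrite ?mulr1 ?mul1r.
Qed.

Lemma zeta_sigma1_gamma12_comm n S R (g : C) :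
  zeta_word n S R (mx2 g 0 0 1) sigma1_gamma12 =
  zeta_word n S R (mx2 g 0 0 1) gamma12_sigma1.
Proof.
rewrite /zeta_word /zeta_letter /= !mulmx1 !mulmxA -[in LHS]mulmxA Lmx_gamma12.
by rewrite Lmx_diag_comm // => i j /= hi hj; rewrite !mxE hi hj.
Qed.

Lemma unfaithful_diag_gamma n S R (g : C) :
  (2 <= n)%N -> unfaithful n S R (mx2 g 0 0 1).
Proof.
move=> hn; exists sigma1_gamma12, gamma12_sigma1.
split; last split; last split.
- by move=> x /= [<-|[<-|[<-|[]]]] /=; lia.
- by move=> x /= [<-|[<-|[<-|[]]]] /=; lia.
- exact: sigma1_gamma12_neq.
- exact: zeta_sigma1_gamma12_comm.
Qed.

Theorem theorem3p5 (n : nat) (hn : (3 <= n)%N) :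
  (* (1) *)
  (forall b c sb sc : C, b != 0 -> c != 0 -> sb ^+ 2 = b -> sc ^+ 2 = c ->
     unfaithful n (mx2 0 b c 0) (mx2 0 (- (sb / sc)) (- (sc / sb)) 0) (mx2 (-1) 0 0 1)) /\
  (* (2) *)
  (forall b c sb sc : C, b != 0 -> c != 0 -> sb ^+ 2 = b -> sc ^+ 2 = c ->
     unfaithful n (mx2 0 b c 0) (mx2 0 (sb / sc) (sc / sb) 0) (mx2 (-1) 0 0 1)) /\
  (* (3) *)
  (forall b c sb sc : C, b != 0 -> c != 0 -> sb ^+ 2 = b -> sc ^+ 2 = c ->
     unfaithful n (mx2 0 b c 0) (mx2 0 (- (sb / sc)) (- (sc / sb)) 0) 1%:M) /\
  (* (4) *)
  (forall b c sb sc : C, b != 0 -> c != 0 -> sb ^+ 2 = b -> sc ^+ 2 = c ->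
     unfaithful n (mx2 0 b c 0) (mx2 0 (sb / sc) (sc / sb) 0) 1%:M) /\
  (* (5) *)
  (forall x : C, x != 0 ->
     unfaithful n 1%:M (mx2 0 x x^-1 0) (mx2 (-1) 0 0 1)) /\
  (* (6) *)
  (forall x : C, x != 0 ->
     unfaithful n 1%:M (mx2 0 x x^-1 0) 1%:M) /\
  (* (7) *)
  unfaithful n 1%:M 1%:M 1%:M.
Proof.
have unf S R g : unfaithful n S R (mx2 g 0 0 1).
  by apply: unfaithful_diag_gamma; lia.
by rewrite -mx2_1; do !split=> *; apply: unf.
Qed.
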